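(* Let $1<\alpha<2$ and let $N\ge 3$ be an integer. Define, for $1\le i\le N-1$, $$\widetilde b_{i,i}=2\big[(i+1)^{3-\alpha}-2(3-\alpha)i^{2-\alpha}-(i-1)^{3-\alpha}\big]+2\big[(N-i+1)^{3-\alpha}-2(3-\alpha)(N-i)^{2-\alpha}-(N-i-1)^{3-\alpha}\big],$$ and for $1\le i\le N-2$, $$\widetilde b_{i,i+1}=-2\big[(i+1)^{3-\alpha}-i^{3-\alpha}\big]+(3-\alpha)\big[(i+1)^{2-\alpha}+i^{2-\alpha}\big]-2\big[(N-i)^{3-\alpha}-(N-i-1)^{3-\alpha}\big]+(3-\alpha)\big[(N-i)^{2-\alpha}+(N-i-1)^{2-\alpha}\big].$$ Let $B_h=(b_{i,j})_{i,j=1}^{N-1}$ be the symmetric matrix with $b_{i,i}=8-2^{4-\alpha}+\widetilde b_{i,i}$ ($1\le i\le N-1$), $b_{i,i+1}=b_{i+1,i}=-7-3^{3-\alpha}+2^{5-\alpha}+\widetilde b_{i,i+1}$ ($1\le i\le N-2$), and, for $m=|j-i|\ge 2$, $$b_{i,j}=-(m+2)^{3-\alpha}+4(m+1)^{3-\alpha}-6m^{3-\alpha}+4(m-1)^{3-\alpha}-(m-2)^{3-\alpha}.$$ Then: (1) $b_{i,j}<0$ for all $j\neq i$, $\widetilde b_{i,i+1}<0$ for $1\le i\le N-2$, and $\widetilde b_{i,i}<0$ for $1\le i\le N-1$; (2) for every $1\le i\le N-1$, $\sum_{j=1}^{N-1}b_{i,j}>0$ and $b_{i,i}>\sum_{j\neq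 i}|b_{i,j}|>0$.
   Context: Here $0^{p}=0$ for $p>0$. The matrix $B_h$ is (up to the positive factor $\kappa_\alpha/(h^{\alpha-1}\Gamma(4-\alpha))$, $\kappa_\alpha=-1/(2\cos(\alpha\pi/2))$, $h=b/N$) the stiffness matrix of the piecewise linear finite element discretization on the uniform mesh $x_i=ih$ of $(0,b)$ of the one-dimensional fractional Laplacian $C_\alpha\int_{0}^{b}\frac{u(x)-u(y)}{|x-y|^{1+\alpha}}dy$ with zero exterior condition. *)

(* R : realType, real powers via powR (a `^ x),
   which satisfies 0 `^ p = 0 for p <> 0, matching the paper's 0^p = 0. *)
From mathcomp Require Import all_boot all_order all_algebra.
From mathcomp Require Import all_classical all_reals all_analysis.
Set Implicit Arguments. Unset Strict Implicit. Unset Printing Implicit Defensive.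
Import Order.TTheory GRing.Theory Num.Theory.
Local Open Scope ring_scope.

Section Bh.
Variable R : realType.

Definition pn (n : nat) (p : R) : R := (n%:R) `^ p.

Definition btil_diag (a : R) (N i : nat) : R :=
  2 * (pn i.+1 (3 - a) - 2 * (3 - a) * pn i (2 - a) - pn i.-1 (3 - a))
  + 2 * (pn (N - i).+1 (3 - a) - 2 * (3 - a) * pn (N - i) (2 - a)
         - pn (N - i - 1) (3 - a)).

Definition btil_off (a : R) (N i : nat) : R :=
  - 2 * (pn i.+1 (3 - a) - pn i (3 - a))
  + (3 - a) * (pn i.+1 (2 - a) + pn i (2 - a))
  - 2 * (pn (N - i) (3 - a) - pn (N - i - 1) (3 - a))
  + (3 - a) * (pn (N - i) (2 - a) + pn (N - i - 1) (2 - a)).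

Definition bfar (a : R) (m : nat) : R :=
  - pn m.+2 (3 - a) + 4 * pn m.+1 (3 - a) - 6 * pn m (3 - a)
  + 4 * pn m.-1 (3 - a) - pn (m - 2) (3 - a).

Definition bmat (a : R) (N i j : nat) : R :=
  if i == j then 8 - 2 `^ (4 - a) + btil_diag a N i
  else if j == i.+1 then - 7 - 3 `^ (3 - a) + 2 `^ (5 - a) + btil_off a N i
  else if i == j.+1 then - 7 - 3 `^ (3 - a) + 2 `^ (5 - a) + btil_off a N j
  else bfar a (if i < j then j - i else i - j)%N.

End Bh.

From mathcomp Require Import all_boot all_order all_algebra.
From mathcomp Require Import all_classical all_reals all_analysis.
From mathcomp Require Import zify ring lra.
Set Implicit Arguments. Unset Strict Implicit. Unset Printing Implicit Defensive.
Import Order.TTheory GRing.Theory Num.Theory.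
Import numFieldNormedType.Exports.
Local Open Scope ring_scope.
Local Open Scope classical_set_scope.

(* Write p = 3 - a, so 1 < p < 2, and F x = x ^ p.  Away from the tridiagonal band,
   b_{i,j} is minus the fourth central difference of F at |i - j|; it is negative because the
   second difference of F' is increasing (x ^ (p - 2) is convex).  The corrections btil are
   sums of trapezoid- and midpoint-rule errors for the concave function F' on unit cells, hence
   negative.  In a row sum the far entries telescope to third differences of F, the constants
   cancel exactly, and on each side of the diagonal there remains the second difference of F'
   at the distance k to the boundary minus the third difference
   F (k + 1) - 3 F k + 3 F (k - 1) - F (k - 2), which is positive by the mean value theorem and
   the monotonicity of that second difference (the two rows next to the boundary need one more
   explicit inequality at k = 1).  Diagonal dominance then follows from the signs. *)

Section calculus.
Variable R : realType.
Implicit Types (f g : R -> R) (a b c d h r u v x y : R).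

Lemma is_derive_continuous f (df : R) x : is_derive x 1 f df -> {for x, continuous f}.
Proof. by case=> /derivable1_diffP /differentiable_continuous. Qed.

Lemma is_derive_within_continuous f (df : R -> R) a b :
  (forall x, a <= x <= b -> is_derive x 1 f (df x)) ->
  {within `[a, b], continuous f}.
Proof.
move=> fdf; apply: derivable_within_continuous => x.
by rewrite in_itv /= => /fdf [].
Qed.

Lemma MVT_lt f (df : R -> R) a b : a < b ->
  (forall x, a < x < b -> is_derive x 1 f (df x)) ->
  {within `[a, b], continuous f} ->
  exists2 c, a < c < b & f b - f a = df c * (b - a).
Proof.
move=> ab fdf cf.
have fdf' x : x \in `]a, b[%R -> is_derive x 1 f (df x) by rewrite in_itv; exact: fdf.
by have [c] := MVT ab fdf' cf; rewrite in_itv; exists c.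
Qed.

Lemma MVT_cc f (df : R -> R) a b : a < b ->
  (forall x, a <= x <= b -> is_derive x 1 f (df x)) ->
  exists2 c, a < c < b & f b - f a = df c * (b - a).
Proof.
move=> ab fdf; apply: MVT_lt ab _ (is_derive_within_continuous fdf).
by move=> x /andP[ax xb]; apply: fdf; rewrite !ltW.
Qed.

Lemma within_continuous_eq f g a b : continuous g ->
  (forall x, a <= x <= b -> f x = g x) -> {within `[a, b], continuous f}.
Proof.
move=> cg fg; apply: (subspace_eq_continuous (f := g)).
  by move=> x; rewrite inE /= in_itv /= => /fg.
exact: continuous_subspaceT.
Qed.

Lemma is_derive_translate f (df : R) x d :
  is_derive (x + d) 1 f df -> is_derive x 1 (fun y => f (y + d)) df.
Proof.
move=> fd; have gd : is_derive x 1 (fun y : R => y + d) 1.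
  by apply: is_derive_eq; rewrite addr0.
by have := is_derive1_comp (g := fun y => y + d) fd gd; rewrite mulr1.
Qed.

Lemma is_derive_reflect f (df : R) x d :
  is_derive (d - x) 1 f df -> is_derive x 1 (fun y => f (d - y)) (- df).
Proof.
move=> fd; have gd : is_derive x 1 (fun y : R => d - y) (- 1).
  by apply: is_derive_eq; rewrite add0r mul1r.
by have := is_derive1_comp (g := fun y => d - y) fd gd; rewrite mulrN1.
Qed.

Lemma midpoint_lt_of_derive_increasing f (df : R -> R) x h : 0 < h ->
  (forall y, x - h <= y <= x + h -> is_derive y 1 f (df y)) ->
  (forall y z, x - h <= y -> y < z -> z <= x + h -> df y < df z) ->
  2 * f x < f (x - h) + f (x + h).
Proof.
move=> h0 fdf df_incr.
have [c1 /andP[lc1 c1x] E1] :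
    exists2 c, x - h < c < x & f x - f (x - h) = df c * (x - (x - h)).
  by apply: MVT_cc; [lra | move=> y /andP[ly yx]; apply: fdf; apply/andP; split; lra].
have [c2 /andP[xc2 c2r] E2] :
    exists2 c, x < c < x + h & f (x + h) - f x = df c * (x + h - x).
  by apply: MVT_cc; [lra | move=> y /andP[ly yx]; apply: fdf; apply/andP; split; lra].
have : df c1 * h < df c2 * h by rewrite ltr_pM2r // df_incr ?ltW // (lt_trans c1x).
rewrite (_ : x - (x - h) = h) in E1; last by ring.
rewrite (_ : x + h - x = h) in E2; last by ring.
lra.
Qed.

(* Since [0 `^ r = 0] but [x `^ r = 1] for [x < 0], [powR ^~ r] is not continuous at [0];
   clipping the base at [0] gives a continuous extension of [x `^ r] from [[0, +oo[]. *)
Lemma powR_max0_continuous r : 0 < r -> continuous (fun x => Num.max x 0 `^ r).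
Proof.
move=> r0 x; have [x0|x0] := ltP 0 x.
  apply: (@continuous_comp _ _ _ (fun y : R => Num.max y 0) (fun t => t `^ r)).
    exact: continuous_max cvg_id (cvg_cst _).
  by apply: is_derive_continuous; apply: is_derive1_powR; rewrite lt_max x0.
apply/cvgrPdist_lt => e e0; near=> y.
rewrite (max_idPr x0) powR0 ?gt_eqF // sub0r normrN ger0_norm ?powR_ge0 //.
have -> : e = (e `^ r^-1) `^ r by rewrite -powRrM mulVf ?gt_eqF // powRr1 // ltW.
apply: gt0_ltr_powR; rewrite // ?nnegrE ?le_max ?lexx ?orbT ?powR_ge0 //.
rewrite gt_max powR_gt0 // andbT; near: y.
by apply: lt_nbhsl; apply: le_lt_trans x0 _; rewrite powR_gt0.
Unshelve. all: by end_near.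
Qed.

Lemma lt0_powR_decreasing r x y : r < 0 -> 0 < x -> x < y -> y `^ r < x `^ r.
Proof.
move=> r0 x0 xy; have y0 := lt_trans x0 xy.
have powRNN z : z `^ r = (z `^ (- r))^-1 by rewrite -powRN opprK.
rewrite (powRNN x) (powRNN y) ltf_pV2 ?posrE ?powR_gt0 //.
by rewrite gt0_ltr_powR ?oppr_gt0 // nnegrE ltW.
Qed.

Definition dpowR r x := r * x `^ (r - 1).

Lemma is_derive_powR_translate r d x : 0 < x + d ->
  is_derive x 1 (fun y => (y + d) `^ r) (dpowR r (x + d)).
Proof.
by move=> xd; exact: (is_derive_translate (f := fun z => z `^ r) (is_derive1_powR r xd)).
Qed.

Lemma is_derive_dpowR r x : 0 < x -> is_derive x 1 (dpowR r) (r * dpowR (r - 1) x).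
Proof. by move=> x0; apply: is_deriveZ; apply: is_derive1_powR. Qed.

Lemma dpowR_increasing r x y : r < 0 -> 0 < x -> x < y -> dpowR r x < dpowR r y.
Proof.
move=> r0 x0 xy; rewrite /dpowR ltr_nM2l //.
by apply: lt0_powR_decreasing; rewrite // subr_lt0 (lt_trans r0).
Qed.

Lemma dpowR_decreasing r x y : 0 < r < 1 -> 0 < x -> x < y -> dpowR r y < dpowR r x.
Proof.
move=> /andP[r0 r1] x0 xy; rewrite /dpowR ltr_pM2l //.
by apply: lt0_powR_decreasing; rewrite // subr_lt0.
Qed.

Lemma powR_midpoint_gt r x h : r < 0 -> 0 < h < x ->
  2 * x `^ r < (x - h) `^ r + (x + h) `^ r.
Proof.
move=> r0 /andP[h0 hx].
apply: (midpoint_lt_of_derive_increasing (f := fun y => y `^ r) (df := dpowR r)) => //.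
- by move=> y /andP[xy _]; apply: is_derive1_powR; lra.
- by move=> y z xy yz _; apply: dpowR_increasing => //; lra.
Qed.

Lemma powR_midpoint_lt r x h : 0 < r < 1 -> 0 < h < x ->
  (x - h) `^ r + (x + h) `^ r < 2 * x `^ r.
Proof.
move=> r01 /andP[h0 hx].
suff : 2 * - x `^ r < - (x - h) `^ r + - (x + h) `^ r by lra.
apply: (midpoint_lt_of_derive_increasing (f := fun y => - y `^ r)
  (df := fun y => - dpowR r y)) => //.
- by move=> y /andP[xy _]; apply: is_deriveN; apply: is_derive1_powR; lra.
- by move=> y z xy yz _; rewrite ltrN2; apply: dpowR_decreasing => //; lra.
Qed.

Lemma powR_chord_gt r u v : 0 < r < 1 -> 0 < u < v ->
  dpowR r v * (v - u) < v `^ r - u `^ r.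
Proof.
move=> r01 /andP[u0 uv].
have [c /andP[uc cv] ->] : exists2 c, u < c < v & v `^ r - u `^ r = dpowR r c * (v - u).
  apply: (MVT_cc (f := fun y => y `^ r) (df := dpowR r)) => // y /andP[uy _].
  by apply: is_derive1_powR; lra.
by rewrite ltr_pM2r ?subr_gt0 //; apply: dpowR_decreasing => //; lra.
Qed.

Definition diff2 f x := f (x + 1) - 2 * f x + f (x - 1).

Lemma is_derive_diff2 f (df : R -> R) x :
  is_derive (x + 1) 1 f (df (x + 1)) -> is_derive x 1 f (df x) ->
  is_derive (x - 1) 1 f (df (x - 1)) -> is_derive x 1 (diff2 f) (diff2 df x).
Proof.
move=> d1 d0 d2.
exact: is_deriveD (is_deriveB (is_derive_translate d1) (is_deriveZ 2 d0))
  (is_derive_translate d2).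
Qed.

Lemma diff2_continuous f : continuous f -> continuous (diff2 f).
Proof.
move=> cf x; have cf_translate d : {for x, continuous (fun y => f (y + d))}.
  exact: (@continuous_comp _ _ _ (fun y => y + d) f)
    (continuousD cvg_id (cvg_cst _)) (cf _).
exact: continuousD (continuousB (cf_translate 1) (continuousM (cvg_cst _) (cf x)))
  (cf_translate (-1)).
Qed.

Lemma diff2_continuous_within f g a b : continuous g ->
  (forall y, 0 <= y -> f y = g y) -> 1 <= a -> {within `[a, b], continuous (diff2 f)}.
Proof.
move=> cg fg a1; apply: (within_continuous_eq (g := diff2 g)) (diff2_continuous cg) _.
by move=> y /andP[ay _]; rewrite /diff2 !fg //; lra.
Qed.

Lemma diff2_dpowR r x : diff2 (dpowR r) x = r * diff2 (fun y => y `^ (r - 1)) x.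
Proof. by rewrite /diff2 /dpowR; ring. Qed.

Lemma diff2_powR_gt0 r x : r < 0 -> 1 < x -> 0 < diff2 (fun y => y `^ r) x.
Proof.
move=> r0 x1; have := powR_midpoint_gt (x := x) (h := 1) r0.
by rewrite /diff2 ltr01 x1 => /(_ isT); lra.
Qed.

Lemma is_derive_diff2_powR r x : 1 < x ->
  is_derive x 1 (diff2 (fun y => y `^ r)) (diff2 (dpowR r) x).
Proof. by move=> x1; apply: is_derive_diff2; apply: is_derive1_powR; lra. Qed.

Lemma is_derive_diff2_dpowR r x : 1 < x ->
  is_derive x 1 (diff2 (dpowR r)) (r * diff2 (dpowR (r - 1)) x).
Proof.
move=> x1; apply: is_derive_eq.
  by apply: (is_derive_diff2 (df := fun y => r * dpowR (r - 1) y));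
    apply: is_derive_dpowR; lra.
by rewrite /diff2; ring.
Qed.

End calculus.

(* Twice the error of the trapezoid rule on [x, x + 1] and the error of the midpoint rule on
   [x - 1, x + 1] for the integral of [dpowR p]; both are negative when [dpowR p] is concave. *)
Definition trapezoid_err (R : realType) (p x : R) :=
  dpowR p x + dpowR p (x + 1) - 2 * ((x + 1) `^ p - x `^ p).

Definition midpoint_err (R : realType) (p x : R) :=
  (x + 1) `^ p - (x - 1) `^ p - 2 * dpowR p x.

Section power_between_1_and_2.
Variable R : realType.
Variable p : R.
Hypothesis p_gt1 : 1 < p.
Hypothesis p_lt2 : p < 2.
Implicit Types (x y z : R).

Local Notation phi := (diff2 (fun y : R => y `^ p)).

Let p_gt0 : 0 < p. Proof. exact: lt_trans p_gt1. Qed.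

Let pm1_01 : 0 < p - 1 < 1.
Proof. by have := p_gt1; have := p_lt2; rewrite subr_gt0 ltrBlDr; lra. Qed.

Lemma trapezoid_err_lt0 x : 0 < x -> trapezoid_err p x < 0.
Proof.
move=> x0.
(* [chi 0 = 0], [chi 1 = - trapezoid_err p x / 2], and [chi] increases because chords of the
   concave [y ^ (p - 1)] are steeper than its tangent at their right end. *)
pose chi s := (s + x) `^ p - x `^ p - s / 2 * (dpowR p x + dpowR p (s + x)).
have [c /andP[c0 c1] chi1] : exists2 c, 0 < c < 1 & chi 1 - chi 0 =
    ((dpowR p (c + x) - dpowR p x) / 2 - c / 2 * (p * dpowR (p - 1) (c + x))) * (1 - 0).
  apply: (MVT_cc (f := chi)) => // s /andP[s0 _]; have sx : 0 < s + x by lra.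
  have d1 := is_derive_powR_translate p sx.
  have d2 := is_derive_translate (is_derive_dpowR p sx).
  (* [d1] and [d2] serve as local instances for the derivative of [chi]. *)
  by apply: is_derive_eq; rewrite /GRing.scale /=; field.
have chord : p * (dpowR (p - 1) (c + x) * c) < p * ((c + x) `^ (p - 1) - x `^ (p - 1)).
  rewrite ltr_pM2l // -[X in _ * X < _](addrK x c).
  by apply: powR_chord_gt => //; rewrite x0 ltrDr.
rewrite /chi /trapezoid_err /dpowR (addrC 1 x) !add0r !mul0r subr0 subrr in chi1 chord *.
lra.
Qed.

Lemma midpoint_err_lt0 x : 1 <= x -> midpoint_err p x < 0.
Proof.
move=> x1.
(* [chi 0 = 0], [chi 1 = midpoint_err p x], and [chi] decreases by the strict midpoint
   concavity of [dpowR p]. *)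
pose chi s := (s + x) `^ p - (x - s) `^ p - 2 * dpowR p x * s.
have chi_cont : {within `[0, 1], continuous chi}.
  apply: (within_continuous_eq (g := fun s =>
    Num.max (s + x) 0 `^ p - Num.max (x - s) 0 `^ p - 2 * dpowR p x * s)).
    move=> s; have cpow := powR_max0_continuous p_gt0.
    exact: continuousB (continuousB
      (continuous_comp (continuousD cvg_id (cvg_cst x)) (cpow _))
      (continuous_comp (continuousB (cvg_cst x) cvg_id) (cpow _)))
      (continuousM (cvg_cst _) cvg_id).
  by move=> s /andP[s0 s1]; rewrite /chi !(max_idPl _) //; lra.
have [c /andP[c0 c1] chi1] : exists2 c, 0 < c < 1 & chi 1 - chi 0 =
    (dpowR p (c + x) + dpowR p (x - c) - 2 * dpowR p x) * (1 - 0).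
  apply: (MVT_lt (f := chi)) => // s /andP[s0 s1].
  have sx : 0 < s + x by lra.
  have xs : 0 < x - s by lra.
  have d1 := is_derive_powR_translate p sx.
  have d2 := is_derive_reflect (f := fun y => y `^ p) (is_derive1_powR p xs).
  by apply: is_derive_eq; rewrite /dpowR /GRing.scale /=; ring.
have mid : p * ((x - c) `^ (p - 1) + (c + x) `^ (p - 1)) < p * (2 * x `^ (p - 1)).
  by rewrite ltr_pM2l // (addrC c); apply: powR_midpoint_lt => //; rewrite c0 /=; lra.
rewrite /chi /midpoint_err /dpowR (addrC 1 x) add0r subr0 mulr0 subr0 in chi1 mid *.
lra.
Qed.

Lemma diff2_dpowR_increasing x y : 1 <= x -> x < y ->
  diff2 (dpowR p) x < diff2 (dpowR p) y.
Proof.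
move=> x1 xy; rewrite -subr_gt0.
have [c /andP[xc cy] ->] : exists2 c, x < c < y &
    diff2 (dpowR p) y - diff2 (dpowR p) x = p * diff2 (dpowR (p - 1)) c * (y - x).
  apply: MVT_lt => //; first by move=> c /andP[xc _]; apply: is_derive_diff2_dpowR; lra.
  apply: (diff2_continuous_within (g := fun y => dpowR p (Num.max y 0))) => //.
    have [pm1_gt0 _] := andP pm1_01.
    have cpow := powR_max0_continuous pm1_gt0.
    by move=> z; exact: continuousM (cvg_cst p) (cpow z).
  by move=> z /max_idPl ->.
rewrite diff2_dpowR !pmulr_rgt0 ?subr_gt0 //.
by apply: diff2_powR_gt0; have := p_lt2; lra.
Qed.

Lemma diff2_powR_step_bounds x : 1 <= x ->
  diff2 (dpowR p) x < phi (x + 1) - phi x < diff2 (dpowR p) (x + 1).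
Proof.
move=> x1; have xx1 : x < x + 1 by rewrite ltrDl.
have [c /andP[xc cx1] ->] : exists2 c, x < c < x + 1 &
    phi (x + 1) - phi x = diff2 (dpowR p) c * (x + 1 - x).
  apply: MVT_lt => //; first by move=> c /andP[xc _]; apply: is_derive_diff2_powR; lra.
  apply: (diff2_continuous_within (g := fun y => Num.max y 0 `^ p)) => //.
    exact: powR_max0_continuous.
  by move=> z /max_idPl ->.
rewrite addrC addKr mulr1.
by rewrite !diff2_dpowR_increasing // (le_trans x1) ?ltW.
Qed.

Lemma diff2_diff2_powR_gt0 x : 2 <= x -> 0 < diff2 phi x.
Proof.
move=> x2; have [x1 x11] : 1 <= x /\ 1 <= x - 1 by split; lra.
have /andP[lo _] := diff2_powR_step_bounds x1.
have /andP[_ hi] := diff2_powR_step_bounds x11.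
by rewrite subrK in hi; rewrite {1}/diff2; lra.
Qed.

Lemma diff2_powR_sub_lt_errors z : 2 <= z ->
  phi z - phi (z - 1) < 2 * midpoint_err p z + trapezoid_err p z + trapezoid_err p (z - 1).
Proof.
move=> z2; have z1 : 1 <= z - 1 by lra.
have /andP[_] := diff2_powR_step_bounds z1; rewrite subrK.
suff -> : 2 * midpoint_err p z + trapezoid_err p z + trapezoid_err p (z - 1)
  = diff2 (dpowR p) z by [].
by rewrite /midpoint_err /trapezoid_err /diff2 subrK; ring.
Qed.

Let two_pow : 2 `^ p = 2 * 2 `^ (p - 1).
Proof. by rewrite mulr_powRB1. Qed.

Let two_pow_le : 2 `^ (p - 1) <= 2.
Proof. by apply: ler1_powR; [rewrite ler1n | have := p_lt2; lra]. Qed.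

Let one_add_one : (1 + 1 : R) = 2. Proof. by []. Qed.

Lemma diff2_powR_sub12 : phi 2 - phi 1 = 3 `^ p - 3 * 2 `^ p + 3.
Proof.
rewrite /diff2; have -> : (2 + 1 : R) = 3 by lra.
have -> : (2 - 1 : R) = 1 by lra.
by rewrite subrr powR0 ?gt_eqF // powR1 one_add_one; lra.
Qed.

Lemma powR_2_3_lt : 4 * 2 `^ p < 7 + 3 `^ p.
Proof.
have /andP[+ _] := diff2_powR_step_bounds (lexx 1).
rewrite one_add_one diff2_powR_sub12.
have -> : diff2 (dpowR p) 1 = p * 2 `^ (p - 1) - 2 * p.
  rewrite /diff2 /dpowR one_add_one subrr powR0 ?powR1 /=; first by ring.
  by rewrite subr_eq0 gt_eqF.
have : 0 <= (2 - p) * (2 - 2 `^ (p - 1)).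
  by rewrite mulr_ge0 // subr_ge0 //; have := p_lt2; lra.
by rewrite two_pow; lra.
Qed.

Lemma errors_at1_gt0 : 0 < 4 - 2 `^ p + 2 * midpoint_err p 1 + trapezoid_err p 1.
Proof.
rewrite /midpoint_err /trapezoid_err /dpowR one_add_one subrr powR0 ?powR1 /=; last first.
  by rewrite gt_eqF.
have : 0 < (2 - p) * (3 - 2 `^ (p - 1)).
  by rewrite mulr_gt0 // subr_gt0; [have := p_lt2 | have := two_pow_le]; lra.
by rewrite two_pow; lra.
Qed.

End power_between_1_and_2.

Lemma diag_dominant_of_offdiag_lt0 (R : realDomainType) (I : eqType) (s : seq I)
    (b : I -> R) i k :
  uniq s -> i \in s -> k \in s -> k != i ->
  (forall j, j \in s -> j != i -> b j < 0) -> 0 < \sum_(j <- s) b j ->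
  \sum_(j <- s | j != i) `|b j| < b i /\ 0 < \sum_(j <- s | j != i) `|b j|.
Proof.
move=> s_uniq i_s k_s ki b_lt0 sum_gt0.
have normE : \sum_(j <- s | j != i) `|b j| = - \sum_(j <- s | j != i) b j.
  rewrite -sumrN big_seq_cond [RHS]big_seq_cond; apply: eq_bigr => j /andP[js ji].
  by rewrite ltr0_norm // b_lt0.
split; first by move: sum_gt0; rewrite (bigD1_seq i) //= normE; lra.
have := @ltr_sum _ _ s [pred j | (j \in s) && (j != i)] (fun=> 0) (fun j => `|b j|).
rewrite big1_eq -big_seq_cond; apply; first by apply/hasP; exists k; rewrite //= k_s ki.
by move=> j /andP[js ji]; rewrite normr_gt0 ltr0_neq0 // b_lt0.
Qed.

Section Bh_entries.
Variable R : realType.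
Variable a : R.
Hypothesis a_gt1 : 1 < a.
Hypothesis a_lt2 : a < 2.

Local Notation p := (3 - a).
Local Notation phi := (diff2 (fun y : R => y `^ (3 - a))).
Local Notation c0 := (8 - 2 `^ (4 - a)).
Local Notation c1 := (- 7 - 3 `^ (3 - a) + 2 `^ (5 - a)).

Let p_gt1 : 1 < p. Proof. by have := a_lt2; lra. Qed.
Let p_lt2 : p < 2. Proof. by have := a_gt1; lra. Qed.

Let natr_pred k : (0 < k)%N -> k.-1%:R = k%:R - 1 :> R.
Proof. by case: k => // k _; rewrite -natr1 addrK. Qed.

Let two_sub_a : 2 - a = p - 1. Proof. by ring. Qed.

Let c0E : c0 = 2 * (4 - 2 `^ p).
Proof.
rewrite (_ : 4 - a = 1 + p); last by ring.
by rewrite [2 `^ _]powRD ?pnatr_eq0 ?implybT // powRr1 //; ring.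
Qed.

Let c1E : c1 = 4 * 2 `^ p - 7 - 3 `^ p.
Proof.
rewrite (_ : 5 - a = 2 + p); last by ring.
by rewrite [2 `^ _]powRD ?pnatr_eq0 ?implybT // powR_mulrn //; ring.
Qed.

Lemma btil_offE N i : (i < N)%N ->
  btil_off a N i = trapezoid_err p i%:R + trapezoid_err p (N - i - 1)%:R.
Proof.
move=> iN; rewrite /btil_off /trapezoid_err /dpowR /pn !natr1 two_sub_a.
have -> : (N - i - 1).+1 = (N - i)%N by lia.
by ring.
Qed.

Lemma btil_diagE N i : (0 < i < N)%N ->
  btil_diag a N i = 2 * midpoint_err p i%:R + 2 * midpoint_err p (N - i)%:R.
Proof.
move=> /andP[i0 iN]; rewrite /btil_diag /midpoint_err /dpowR /pn !natr1 two_sub_a.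
by rewrite -!natr_pred ?subn_gt0 // subn1; ring.
Qed.

Lemma bfarE m : (2 <= m)%N -> bfar a m = - diff2 phi m%:R.
Proof.
move=> m2; have m1 : (0 < m.-1)%N by lia.
by rewrite /bfar /diff2 /pn addrK subrK !natr1 -!natr_pred ?subn2 ?m1 ?(ltnW m2); ring.
Qed.

Lemma bmat_pred N i : (0 < i)%N -> bmat a N i i.-1 = c1 + btil_off a N i.-1.
Proof. by case: i => // i _; rewrite /bmat gtn_eqF // ltn_eqF // eqxx. Qed.

Lemma bmat_succ N i : bmat a N i i.+1 = c1 + btil_off a N i.
Proof. by rewrite /bmat ltn_eqF // eqxx. Qed.

Lemma bmat_far N i j : (i.+2 <= j)%N || (j.+2 <= i)%N ->
  bmat a N i j = bfar a (if i < j then j - i else i - j)%N.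
Proof. by move=> ij; rewrite /bmat; do 3 (case: eqP => [?|_]; first lia). Qed.

Lemma c1_lt0 : c1 < 0.
Proof. by rewrite c1E; have := powR_2_3_lt p_gt1 p_lt2; lra. Qed.

Lemma bfar_lt0 m : (2 <= m)%N -> bfar a m < 0.
Proof.
by move=> m2; rewrite bfarE // oppr_lt0; apply: diff2_diff2_powR_gt0; rewrite ?ler_nat.
Qed.

Lemma btil_off_lt0 N i : (0 < i)%N -> (i <= N - 2)%N -> btil_off a N i < 0.
Proof.
move=> i0 iN; rewrite btil_offE; last by lia.
have trap_lt0 k : (0 < k)%N -> trapezoid_err p k%:R < 0.
  by move=> k0; apply: trapezoid_err_lt0 => //; rewrite ltr0n.
have /trap_lt0 : (0 < N - i - 1)%N by lia.
by have := trap_lt0 i i0; lra.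
Qed.

Lemma btil_diag_lt0 N i : (0 < i < N)%N -> btil_diag a N i < 0.
Proof.
move=> iN; rewrite btil_diagE //.
have mid_lt0 k : (0 < k)%N -> midpoint_err p k%:R < 0.
  by move=> k0; apply: midpoint_err_lt0 => //; rewrite ler1n.
have /mid_lt0 : (0 < N - i)%N by lia.
have /mid_lt0 : (0 < i)%N by lia.
lra.
Qed.

Lemma bmat_lt0 N i j : (0 < i < N)%N -> (0 < j < N)%N -> i != j -> bmat a N i j < 0.
Proof.
move=> /andP[i0 iN] /andP[j0 jN] ij; have := c1_lt0.
have [ji|ji] := eqVneq j i.+1.
  subst j; have /(btil_off_lt0 i0) : (i <= N - 2)%N by lia.
  by rewrite bmat_succ; lra.
have [ij'|ij'] := eqVneq i j.+1.
  subst i; have /(btil_off_lt0 j0) : (j <= N - 2)%N by lia.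
  by rewrite (bmat_pred N (ltn0Sn j)); lra.
by move=> _; rewrite bmat_far; [apply: bfar_lt0; case: ifP | ]; lia.
Qed.

Lemma sum_bfar M : (2 <= M)%N ->
  \sum_(2 <= m < M) bfar a m = (phi 2 - phi 1) - (phi M%:R - phi (M%:R - 1)).
Proof.
move=> M2; rewrite (telescope_sumr_eq (fun m => phi (m%:R - 1) - phi m%:R)) //.
  by rewrite (_ : 2%:R - 1 = 1 :> R); [ring | lra].
by move=> m /andP[m2 _]; rewrite bfarE // /= -(natr1 m) addrK /diff2; ring.
Qed.

Lemma sum_half_row (g : nat -> R) b1 M : (0 < M)%N ->
  ((2 <= M)%N -> g 1%N = b1) -> (forall m, (2 <= m < M)%N -> g m = bfar a m) ->
  \sum_(1 <= m < M) g m =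
  if (2 <= M)%N then b1 + ((phi 2 - phi 1) - (phi M%:R - phi (M%:R - 1))) else 0.
Proof.
move=> M0 g1 gE; case: ltnP => M2; last by rewrite big_geq.
by rewrite big_ltn // g1 // -sum_bfar //; congr (_ + _); apply: eq_big_nat.
Qed.

Lemma sum_bmat_split N i : (0 < i < N)%N ->
  \sum_(1 <= j < N) bmat a N i j = \sum_(1 <= m < i) bmat a N i (i - m)
    + bmat a N i i + \sum_(1 <= m < N - i) bmat a N i (i + m).
Proof.
move=> /andP[i0 iN]; rewrite (big_cat_nat _ (n := i)) //=; last exact: ltnW.
rewrite (big_ltn iN) addrA; congr (_ + _ + _).
  by rewrite big_nat_rev; apply: eq_big_nat => m /andP[m1 mi]; congr bmat; lia.
rewrite -[i.+1]add1n big_addn; apply: eq_big_nat => m _; congr bmat; lia.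
Qed.

Lemma sum_bmat_rowE N i : (0 < i < N)%N ->
  \sum_(1 <= j < N) bmat a N i j =
    (if (2 <= i)%N then
       c1 + btil_off a N i.-1 + ((phi 2 - phi 1) - (phi i%:R - phi (i%:R - 1)))
     else 0)
  + (c0 + btil_diag a N i)
  + (if (2 <= N - i)%N then
       c1 + btil_off a N i + ((phi 2 - phi 1) - (phi (N - i)%:R - phi ((N - i)%:R - 1)))
     else 0).
Proof.
move=> /andP[i0 iN]; rewrite sum_bmat_split ?i0 //.
rewrite (sum_half_row (b1 := c1 + btil_off a N i.-1)) //; first last.
- by move=> m /andP[m2 mi]; rewrite bmat_far; [congr bfar; case: ifP; lia | lia].
- by move=> _; rewrite subn1 bmat_pred.
rewrite (sum_half_row (b1 := c1 + btil_off a N i)) ?subn_gt0 //; first last.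
- by move=> m /andP[m2 _]; rewrite bmat_far; [congr bfar; case: ifP; lia | lia].
- by move=> _; rewrite addn1 bmat_succ.
by rewrite /bmat eqxx.
Qed.

Lemma sum_bmat_row_gt0 N i : (3 <= N)%N -> (0 < i < N)%N ->
  0 < \sum_(1 <= j < N) bmat a N i j.
Proof.
move=> N3 /andP[i0 iN]; rewrite sum_bmat_rowE ?i0 // btil_diagE ?i0 //.
set x := i%:R; set y := (N - i)%:R.
have -> : btil_off a N i.-1 = trapezoid_err p (x - 1) + trapezoid_err p y.
  rewrite btil_offE ?natr_pred ?(ltn_trans _ iN) ?prednK //.
  by congr (_ + trapezoid_err _ _%:R); lia.
have -> : btil_off a N i = trapezoid_err p x + trapezoid_err p (y - 1).
  by rewrite btil_offE // subn1 natr_pred // subn_gt0.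
have c_sum : c0 / 2 + c1 + (phi 2 - phi 1) = 0.
  by rewrite c0E c1E diff2_powR_sub12 //; lra.
have corner : 0 < c0 / 2 + 2 * midpoint_err p 1 + trapezoid_err p 1.
  by rewrite c0E; have := errors_at1_gt0 p_gt1 p_lt2; lra.
have side_gt0 z : 2 <= z ->
    0 < 2 * midpoint_err p z + trapezoid_err p z + trapezoid_err p (z - 1)
        - (phi z - phi (z - 1)).
  by move=> z2; rewrite subr_gt0; apply: diff2_powR_sub_lt_errors.
have trap_x : trapezoid_err p x < 0 by apply: trapezoid_err_lt0; rewrite ?ltr0n.
have trap_y : trapezoid_err p y < 0.
  by apply: trapezoid_err_lt0; rewrite ?ltr0n ?subn_gt0.
case: ifP => i2; case: ifP => Ni2.
- have := side_gt0 x; have := side_gt0 y.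
  rewrite (ler_nat _ 2 i) (ler_nat _ 2 (N - i)) i2 Ni2.
  by move=> /(_ isT) side_y /(_ isT) side_x; lra.
- have -> : y = 1 by rewrite /y (_ : N - i = 1)%N //; lia.
  by have := side_gt0 x; rewrite (ler_nat _ 2 i) i2 => /(_ isT); lra.
- have x1 : x = 1 by rewrite /x (_ : i = 1)%N //; lia.
  rewrite x1 in trap_x *.
  by have := side_gt0 y; rewrite (ler_nat _ 2 (N - i)) Ni2 => /(_ isT); lra.
- lia.
Qed.

End Bh_entries.

Theorem lemma3p3 (R : realType) (a : R) (N : nat) :
  1 < a -> a < 2 -> (3 <= N)%N ->
  ((forall i j : nat, (1 <= i <= N - 1)%N -> (1 <= j <= N - 1)%N -> i <> j ->
      bmat a N i j < 0)
   /\ (forall i : nat, (1 <= i <= N - 2)%N -> btil_off a N i < 0)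
   /\ (forall i : nat, (1 <= i <= N - 1)%N -> btil_diag a N i < 0))
  /\
  (forall i : nat, (1 <= i <= N - 1)%N ->
      0 < \sum_(1 <= j < N) bmat a N i j
      /\ \sum_(1 <= j < N | j != i) `|bmat a N i j| < bmat a N i i
      /\ 0 < \sum_(1 <= j < N | j != i) `|bmat a N i j|).
Proof.
move=> a1 a2 N3; split; first split.
- by move=> i j hi hj /eqP ij; apply: bmat_lt0 => //; lia.
- split; first by move=> i /andP[i1 iN]; apply: btil_off_lt0.
  by move=> i hi; apply: btil_diag_lt0 => //; lia.
move=> i hi; have row_gt0 : 0 < \sum_(1 <= j < N) bmat a N i j.
  by apply: sum_bmat_row_gt0 => //; lia.
split=> //.
apply: (diag_dominant_of_offdiag_lt0 (k := if (i < N - 1)%N then i.+1 else i.-1)).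
- exact: iota_uniq.
- by rewrite mem_index_iota; lia.
- by rewrite mem_index_iota; case: ifP; lia.
- by case: ifP; lia.
- by move=> j; rewrite mem_index_iota => jN ji; apply: bmat_lt0 => //; lia.
- exact: row_gt0.
Qed.
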